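(* Consider the Basilica replacement rule. Let $n\in\mathbb{N}$ and let $O_n$ be the graph with $n+3$ vertices and $2n+4$ edges described below. Then the sublevel complex $K(O_n)_{2n+3}$ is empty; equivalently, for every rearrangement $X(O_n)\to X(G)$ the graph $G$ has at least $2n+4$ edges (so every graph obtained from $O_n$ by a finite sequence of simple expansions and contractions has at least $2n+4$ edges).
   Context: Basilica replacement rule $e\to R$: $e$ is an edge $v\to w$; $R$ has vertices $v,w,4$ and edges $1\colon v\to4$, a loop $2$ at $4$, $3\colon 4\to w$. A simple expansion $G\lhd\varepsilon$ of a finite directed graph $G$ at an edge $\varepsilon$ (loops allowed) deletes $\varepsilon$ and inserts a new vertex $\varepsilon4$ with edges $\varepsilon1$ from the initial vertex of $\varepsilon$ to $\varepsilon4$, a loop $\varepsilon2$ at $\varepsilon4$, and $\varepsilon3$ from $\varepsilon4$ to the terminal vertex of $\varepsilon$; a simple contraction is the reverse. The graph $O_n$: vertices $u_0,\dots,u_n,p,l$; for each $0\le i<n$ two edges $u_i\to u_{i+1}$ and $u_{i+1}\to u_i$; an edge $v\colon u_0\to p$ and a loop $w$ at $p$; an edge $a\colon u_n\to l$ and a loop $b$ at $l$. For a base graph $G$, $K(G)$ denotes the rearrangement cube complex: its $0$-cubes are range equivalence classes $[f]$ of rearrangements $f\colon X(G)\to X(G')$ (homeomorphisms of limit spaces given piecewise on cells by canonical prefix-replacement maps, equivalently represented by a graph isomorphism between an expansion of $G$ and an expansion of $G'$), with cubes spanned by $\{[\Delta_T\circ f]: T\subseteq S\}$ for $S\subseteq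 E(G')$, $\Delta_T$ denoting expansion of the edges in $T$. The rank of $[f]$ is $|E(G')|$, extended affinely over cubes, and $K(G)_m$ is the subcomplex spanned by $0$-cubes of rank $\le m$. *)

From mathcomp Require Import all_boot.
Set Implicit Arguments. Unset Strict Implicit. Unset Printing Implicit Defensive.

(* A finite directed multigraph (loops and parallel edges allowed):
   vertices are 0, ..., gnv - 1; the edges are the entries of the list
   gedges, each entry (s, t) being an edge from s to t (the position in the
   list names the edge). *)
Record graph := Graph { gnv : nat; gedges : seq (nat * nat) }.

Definition wf_graph (G : graph) : bool :=
  all (fun e => (e.1 < gnv G) && (e.2 < gnv G)) (gedges G).

(* Simple expansion at the i-th edge eps = (v, w) (Basilica rule):
   delete eps, add a new vertex x := gnv G (= eps4) with edges
   eps1 : v -> x, eps2 : x -> x (loop), eps3 : x -> w. *)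
Definition expand (G : graph) (i : nat) : graph :=
  let e := nth (0, 0) (gedges G) i in
  let x := gnv G in
  Graph (gnv G).+1
        (take i (gedges G) ++ drop i.+1 (gedges G)
              ++ [:: (e.1, x); (x, x); (x, e.2)]).

Inductive expansion : graph -> graph -> Prop :=
| expansion_refl G : expansion G G
| expansion_step G i H :
    i < size (gedges G) -> expansion (expand G i) H -> expansion G H.

Definition graph_iso (G H : graph) : Prop :=
  gnv G = gnv H /\
  exists f : nat -> nat,
    {in [pred v | v < gnv G] &, injective f} /\
    (forall v, v < gnv G -> f v < gnv H) /\
    perm_eq [seq (f e.1, f e.2) | e <- gedges G] (gedges H).

(* There is a rearrangement X(G) -> X(G'): some expansion of G is
   isomorphic to some expansion of G'. *)
Definition rearrangement_exists (G G' : graph) : Prop :=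
  exists E1 E2, expansion G E1 /\ expansion G' E2 /\ graph_iso E1 E2.

(* The graph O_n: u_i = i (0 <= i <= n), p = n+1, l = n+2. *)
Definition O_graph (n : nat) : graph :=
  Graph n.+3
    (flatten [seq [:: (i, i.+1); (i.+1, i)] | i <- iota 0 n]
       ++ [:: (0, n.+1); (n.+1, n.+1); (n, n.+2); (n.+2, n.+2)]).

From mathcomp Require Import all_boot zify.
Set Implicit Arguments. Unset Strict Implicit. Unset Printing Implicit Defensive.

(* Call a vertex essential unless it has in- and out-degree 2 and deleting it
   leaves all vertices of in-degree 1 and out-degree 2 linked, and call a graph
   two-edge-linked if no single edge separates two such vertices.  Both notions
   are invariant under isomorphism; simple expansions and contractions preserve
   two-edge-linkedness and the essentiality of old vertices, while the vertex
   created by expanding a two-edge-linked graph is never essential.  All n + 3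
   vertices of O_n are essential and O_n is two-edge-linked, so along a
   rearrangement X(O_n) -> X(G) they survive as n + 3 distinct vertices of G.
   As |E| - 2|V| is invariant under expansions and equals -2 for O_n,
   |E(G)| = 2|V(G)| - 2 >= 2n + 4. *)

Implicit Types (E R : seq (nat * nat)) (ok : pred nat).

Definition outdeg E v := count (fun z : nat * nat => z.1 == v) E.
Definition indeg E v := count (fun z : nat * nat => z.2 == v) E.
Definition degrees E v := (indeg E v, outdeg E v).

Definition edges_below x E :=
  all (fun z : nat * nat => (z.1 < x) && (z.2 < x)) E.

Definition adjacent E u v := ((u, v) \in E) || ((v, u) \in E).

Inductive linked (E : seq (nat * nat)) (ok : pred nat) : nat -> nat -> Prop :=
| linked_refl u : linked E ok u u
| linked_step u v w :
    ok u -> ok v -> adjacent E u v -> linked E ok v w -> linked E ok u w.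

Definition essential E v :=
  degrees E v != (2, 2) \/
  exists a b, [/\ degrees E a = (1, 2), degrees E b = (1, 2)
                & ~ linked E (predC1 v) a b].

Definition two_edge_linked E := forall a b z E0,
  degrees E a = (1, 2) -> degrees E b = (1, 2) ->
  perm_eq E (z :: E0) -> linked E0 xpredT a b.

Lemma perm_cat_rem (T : eqType) (p s : seq T) z :
  z \in s -> perm_eq (p ++ s) (z :: p ++ rem z s).
Proof.
move=> zs; rewrite -cat1s perm_sym perm_catCA perm_sym perm_cat2l.
exact: perm_to_rem.
Qed.

Lemma edges_below_rem x z E : edges_below x E -> edges_below x (rem z E).
Proof. by move=> /allP hE; apply/allP => y /mem_rem /hE. Qed.

Lemma linked_trans E ok a b c :
  linked E ok a b -> linked E ok b c -> linked E ok a c.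
Proof. by elim=> // u v w ou ov huv _ IH /IH; apply: linked_step. Qed.

Lemma linked_edge E ok u v : ok u -> ok v -> (u, v) \in E -> linked E ok u v.
Proof.
move=> ou ov huv; apply: linked_step ou ov _ (linked_refl _ _ _).
by rewrite /adjacent huv.
Qed.

Lemma linked_sym E ok a b : linked E ok a b -> linked E ok b a.
Proof.
elim=> [u|u v w ou ov huv _ IH]; first exact: linked_refl.
apply: linked_trans IH (linked_step ov ou _ (linked_refl _ _ _)).
by rewrite /adjacent orbC.
Qed.

Lemma linked_map (h : nat -> nat) E ok E' ok' a b :
  (forall u v, ok u -> ok v -> (u, v) \in E -> linked E' ok' (h u) (h v)) ->
  linked E ok a b -> linked E' ok' (h a) (h b).
Proof.
move=> hE; elim=> [u|u v w ou ov /orP[] huv _ IH]; first exact: linked_refl.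
- exact: linked_trans (hE _ _ ou ov huv) IH.
- exact: linked_trans (linked_sym (hE _ _ ov ou huv)) IH.
Qed.

Lemma linked_sub E ok E' ok' a b :
  (forall u v, ok u -> ok v -> (u, v) \in E -> linked E' ok' u v) ->
  linked E ok a b -> linked E' ok' a b.
Proof. exact: (@linked_map id). Qed.

Lemma linked_perm E E' ok a b :
  perm_eq E E' -> linked E ok a b -> linked E' ok a b.
Proof.
move=> hp; apply: linked_sub => u v ou ov huv.
by apply: linked_edge; rewrite // -(perm_mem hp).
Qed.

Lemma degrees_perm E E' : perm_eq E E' -> degrees E =1 degrees E'.
Proof. by move=> hp v; rewrite /degrees /indeg /outdeg !(permP hp). Qed.

Lemma degrees_above x E v : edges_below x E -> x <= v -> degrees E v = (0, 0).
Proof.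
move=> /allP hE xv; rewrite /degrees /indeg /outdeg.
by congr pair; apply/eqP; rewrite -leqn0 leqNgt -has_count;
  apply/hasPn => z /hE /andP[z1 z2]; rewrite /= ltn_eqF // (leq_trans _ xv).
Qed.

Lemma degrees12_lt x E a : edges_below x E -> degrees E a = (1, 2) -> a < x.
Proof.
by move=> hE ha; rewrite ltnNge; apply/negP => /(degrees_above hE); rewrite ha.
Qed.

Lemma essential_perm E E' v : perm_eq E E' -> essential E v <-> essential E' v.
Proof.
suff imp E1 E2 : perm_eq E1 E2 -> essential E1 v -> essential E2 v.
  by move=> hp; split; apply: imp; rewrite // perm_sym.
move=> hp [nt|[a [b [ha hb nl]]]]; first by left; rewrite -(degrees_perm hp).
right; exists a, b; rewrite -!(degrees_perm hp); split=> // l.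
by apply: nl; apply: linked_perm l; rewrite perm_sym.
Qed.

Lemma two_edge_linked_perm E E' :
  perm_eq E E' -> two_edge_linked E <-> two_edge_linked E'.
Proof.
suff imp E1 E2 : perm_eq E1 E2 -> two_edge_linked E1 -> two_edge_linked E2.
  by move=> hp; split; apply: imp; rewrite // perm_sym.
move=> hp Q a b z E0; rewrite -!(degrees_perm hp) => ha hb hz.
exact: Q ha hb (perm_trans hp hz).
Qed.

Definition expand_edges s t x R := [:: (s, x); (x, x); (x, t)] ++ R.

Section SimpleExpansion.

Variables s t x : nat.
Hypotheses (s_lt_x : s < x) (t_lt_x : t < x).

Lemma edges_below_expand R :
  edges_below x R -> edges_below x.+1 (expand_edges s t x R).
Proof.
move=> /allP hR; rewrite /= !ltnS !leqnn (ltnW s_lt_x) (ltnW t_lt_x) /=.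
by apply/allP => z /hR /andP[z1 z2]; rewrite !ltnS ltnW // ltnW.
Qed.

Lemma degrees_expand_old R v : v != x ->
  degrees (expand_edges s t x R) v = degrees ((s, t) :: R) v.
Proof.
move=> vx; have xv : (x == v) = false by rewrite eq_sym (negbTE vx).
by rewrite /degrees /indeg /outdeg /= xv.
Qed.

Lemma degrees_expand_new R : edges_below x R ->
  degrees (expand_edges s t x R) x = (2, 2).
Proof.
move=> hR; have := degrees_above hR (leqnn x); rewrite /degrees /indeg /outdeg.
by case=> /= -> ->; rewrite eqxx (ltn_eqF s_lt_x) (ltn_eqF t_lt_x).
Qed.

Lemma degrees12_expand R a : edges_below x R ->
  degrees (expand_edges s t x R) a = (1, 2) <-> degrees ((s, t) :: R) a = (1, 2).
Proof.
move=> hR; have [->|ax] := eqVneq a x; last by rewrite degrees_expand_old.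
rewrite degrees_expand_new // (@degrees_above x) //= ?s_lt_x ?t_lt_x //.
Qed.

Lemma linked_expand R ok a b : ok x ->
  linked ((s, t) :: R) ok a b -> linked (expand_edges s t x R) ok a b.
Proof.
move=> ox; apply: linked_sub => u v ou ov; rewrite inE.
case/orP=> [/eqP[eu ev]|huv]; last by apply: linked_edge; rewrite // mem_cat huv orbT.
subst u v; apply: linked_trans (linked_edge ou ox _) (linked_edge ox ov _).
  by rewrite mem_head.
by rewrite !inE eqxx !orbT.
Qed.

Lemma linked_contract R ok a b : edges_below x R -> a != x -> b != x ->
  linked (expand_edges s t x R) ok a b -> linked ((s, t) :: R) ok a b.
Proof.
move=> /allP hR ax bx l.
pose h u := if u == x then (if ok s then s else t) else u.
have hid u : u != x -> h u = u by rewrite /h => /negbTE ->.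
rewrite -(hid a ax) -(hid b bx); apply: linked_map l => u v ou ov.
rewrite mem_cat => /orP[|huv]; last first.
  have /andP[ux vx] := hR _ huv; rewrite !hid ?ltn_eqF //.
  by apply: linked_edge; rewrite // inE huv orbT.
rewrite !inE => /or3P[] /eqP[eu ev]; subst u v; rewrite /h eqxx.
- by rewrite ou ltn_eqF //; apply: linked_refl.
- exact: linked_refl.
- rewrite ltn_eqF //; case: ifP => os; last exact: linked_refl.
  by apply: linked_edge; rewrite ?mem_head.
Qed.

Lemma essential_expand_edges R v : edges_below x R -> v != x ->
  essential (expand_edges s t x R) v <-> essential ((s, t) :: R) v.
Proof.
move=> hR vx; have hE : edges_below x ((s, t) :: R) by rewrite /= s_lt_x t_lt_x.
rewrite /essential degrees_expand_old //.
split=> -[nt|[a [b [ha hb nl]]]]; [by left | right | by left | right].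
- move: ha hb; rewrite !degrees12_expand // => ha hb.
  exists a, b; split=> // l; apply: nl; apply: linked_expand l => /=.
  by rewrite eq_sym.
- exists a, b; split; try exact/degrees12_expand.
  move=> l; apply: nl; apply: linked_contract l => //.
  all: by rewrite ltn_eqF // (degrees12_lt hE).
Qed.

Lemma essential_expand_edges_new R : edges_below x R ->
  two_edge_linked ((s, t) :: R) -> ~ essential (expand_edges s t x R) x.
Proof.
move=> /[dup] hR /allP hRx Q [|[a [b [ha hb []]]]].
  by rewrite degrees_expand_new.
move: ha hb; rewrite !degrees12_expand // => ha hb.
apply: linked_sub (Q a b (s, t) R ha hb (perm_refl _)) => u v _ _ huv.
have /andP[ux vx] := hRx _ huv.
by apply: linked_edge; rewrite /= ?ltn_eqF // mem_cat huv orbT.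
Qed.

Lemma two_edge_linked_expand_edges R : edges_below x R ->
  two_edge_linked ((s, t) :: R) -> two_edge_linked (expand_edges s t x R).
Proof.
move=> hR Q a b z E0; rewrite !degrees12_expand // => ha hb hz.
have [zR|zR] := boolP (z \in R).
  have hE := perm_cat_rem [:: (s, t)] zR.
  have hE0 : perm_eq (expand_edges s t x (rem z R)) E0.
    by rewrite -(perm_cons z) (perm_trans _ hz) // perm_sym (perm_cat_rem [:: _; _; _]).
  exact: linked_perm hE0 (linked_expand _ (Q _ _ _ _ ha hb hE)).
apply: linked_sub (Q a b (s, t) R ha hb (perm_refl _)) => u v _ _ huv.
have : (u, v) \in z :: E0 by rewrite -(perm_mem hz) mem_cat huv orbT.
rewrite inE => /orP[/eqP ez|]; last exact: linked_edge.
by move: zR; rewrite -ez huv.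
Qed.

Lemma two_edge_linked_contract_edges R : edges_below x R ->
  two_edge_linked (expand_edges s t x R) -> two_edge_linked ((s, t) :: R).
Proof.
move=> /[dup] hR /allP hRx Q a b z E0 ha hb hz.
have hE : edges_below x ((s, t) :: R) by rewrite /= s_lt_x t_lt_x.
have ax : a != x by rewrite ltn_eqF // (degrees12_lt hE ha).
have bx : b != x by rewrite ltn_eqF // (degrees12_lt hE hb).
move: ha hb; rewrite -!(degrees12_expand _ hR) => ha hb.
have [ez|nez] := eqVneq z (s, t).
  move: hz; rewrite ez perm_cons => hE0; apply: linked_perm hE0 _.
  pose h u := if u == x then t else u.
  have hid u : u != x -> h u = u by rewrite /h => /negbTE ->.
  rewrite -(hid a ax) -(hid b bx).
  apply: linked_map (Q a b (s, x) [:: (x, x), (x, t) & R] ha hb (perm_refl _)).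
  move=> u v _ _; rewrite !inE => /or3P[/eqP[-> ->]|/eqP[-> ->]|huv].
  - exact: linked_refl.
  - by rewrite /h eqxx ltn_eqF //; apply: linked_refl.
  - have /andP[ux vx] := hRx _ huv.
    by rewrite !hid ?ltn_eqF //; apply: linked_edge.
have zR : z \in R by move: (mem_head z E0); rewrite -(perm_mem hz) inE (negbTE nez).
have hE0 : perm_eq ((s, t) :: rem z R) E0.
  by rewrite -(perm_cons z) (perm_trans _ hz) // perm_sym (perm_cat_rem [:: (s, t)]).
apply: linked_perm hE0 (linked_contract (edges_below_rem _ hR) ax bx _).
exact: Q a b z _ ha hb (perm_cat_rem _ zR).
Qed.

End SimpleExpansion.

Lemma expand_spec G i : wf_graph G -> i < size (gedges G) ->
  exists s t R, [/\ perm_eq (gedges G) ((s, t) :: R),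
    perm_eq (gedges (expand G i)) (expand_edges s t (gnv G) R),
    s < gnv G, t < gnv G & edges_below (gnv G) R].
Proof.
move=> wfG hi; set R := take i (gedges G) ++ drop i.+1 (gedges G).
case E: (nth (0, 0) (gedges G) i) => [s t].
have hp : perm_eq (gedges G) ((s, t) :: R).
  rewrite -E -{1}(cat_take_drop i (gedges G)) (drop_nth (0, 0) hi).
  by rewrite -cat1s perm_catCA.
move: (wfG); rewrite /wf_graph (perm_all _ hp) /= => /andP[/andP[hs ht] hR].
exists s, t, R; split=> //.
by rewrite /expand /= E /= catA perm_catC.
Qed.

Lemma expand_wf G i : wf_graph G -> i < size (gedges G) -> wf_graph (expand G i).
Proof.
move=> wfG hi; have [s [t [R [_ hp hs ht hR]]]] := expand_spec wfG hi.
by rewrite /wf_graph (perm_all _ hp); apply: edges_below_expand.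
Qed.

Lemma size_expand G i : i < size (gedges G) ->
  size (gedges (expand G i)) = (size (gedges G)).+2.
Proof. by move=> hi; rewrite /expand /= !size_cat size_take hi size_drop /=; lia. Qed.

Lemma essential_expand G i v : wf_graph G -> i < size (gedges G) -> v != gnv G ->
  essential (gedges (expand G i)) v <-> essential (gedges G) v.
Proof.
move=> wfG hi vx; have [s [t [R [hp hp' hs ht hR]]]] := expand_spec wfG hi.
by rewrite (essential_perm _ hp) (essential_perm _ hp') essential_expand_edges.
Qed.

Lemma essential_expand_new G i : wf_graph G -> i < size (gedges G) ->
  two_edge_linked (gedges G) -> ~ essential (gedges (expand G i)) (gnv G).
Proof.
move=> wfG hi; have [s [t [R [hp hp' hs ht hR]]]] := expand_spec wfG hi.
rewrite (essential_perm _ hp') (two_edge_linked_perm hp).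
exact: essential_expand_edges_new.
Qed.

Lemma two_edge_linked_expand G i : wf_graph G -> i < size (gedges G) ->
  two_edge_linked (gedges (expand G i)) <-> two_edge_linked (gedges G).
Proof.
move=> wfG hi; have [s [t [R [hp hp' hs ht hR]]]] := expand_spec wfG hi.
rewrite (two_edge_linked_perm hp) (two_edge_linked_perm hp').
by split; [apply: two_edge_linked_contract_edges | apply: two_edge_linked_expand_edges].
Qed.

Lemma expansion_wf G H : expansion G H -> wf_graph G -> wf_graph H.
Proof. by elim=> // {}G i {}H hi _ IH wfG; apply/IH/expand_wf. Qed.

Lemma expansion_gnv G H : expansion G H -> gnv G <= gnv H.
Proof. by elim=> // {}G i {}H _ _ /ltnW. Qed.

Lemma expansion_euler G H : expansion G H ->
  size (gedges H) + 2 * gnv G = size (gedges G) + 2 * gnv H.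
Proof. by elim=> // {}G i {}H hi _; rewrite size_expand //=; lia. Qed.

Lemma expansion_two_edge_linked G H : expansion G H -> wf_graph G ->
  two_edge_linked (gedges H) <-> two_edge_linked (gedges G).
Proof.
elim=> // {}G i {}H hi _ IH wfG.
by rewrite IH ?two_edge_linked_expand ?expand_wf.
Qed.

Lemma expansion_essential G H v : expansion G H -> wf_graph G -> v < gnv G ->
  essential (gedges G) v -> essential (gedges H) v.
Proof.
elim=> // {}G i {}H hi _ IH wfG hv ess.
apply: IH; rewrite ?expand_wf ?essential_expand ?ltn_eqF //=.
exact: ltnW.
Qed.

Lemma expansion_essential_inv G H v : expansion G H -> wf_graph G ->
  two_edge_linked (gedges H) -> v < gnv H -> essential (gedges H) v ->
  v < gnv G /\ essential (gedges G) v.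
Proof.
move=> eGH; elim: eGH v => [|{}G i {}H hi eH IH] v wfG QH hv ess //.
have wfG' := expand_wf wfG hi.
have QG : two_edge_linked (gedges G).
  by rewrite -(two_edge_linked_expand wfG hi) -(expansion_two_edge_linked eH).
have [] := IH v wfG' QH hv ess; rewrite ltnS leq_eqVlt => /orP[/eqP vx|vG] essG'.
  by case: (essential_expand_new wfG hi QG); rewrite -vx.
by rewrite -(essential_expand wfG hi) ?ltn_eqF.
Qed.

Definition relabel (h : nat -> nat) E := [seq (h z.1, h z.2) | z <- E].

Section Relabel.

Variables (N : nat) (h : nat -> nat).
Hypothesis h_inj : {in [pred v | v < N] &, injective h}.

Lemma degrees_relabel E v : edges_below N E -> v < N ->
  degrees (relabel h E) (h v) = degrees E v.
Proof.
move=> /allP hE hv; rewrite /degrees /indeg /outdeg !count_map.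
by congr pair; apply: eq_in_count => z /hE /andP[z1 z2] /=; rewrite (inj_in_eq h_inj).
Qed.

Lemma degrees12_relabel E a' : edges_below N E ->
  degrees (relabel h E) a' = (1, 2) -> exists2 a, a < N & a' = h a.
Proof.
move=> /allP hE; rewrite /degrees /outdeg => -[_ out2].
have : has (fun z : nat * nat => z.1 == a') (relabel h E) by rewrite has_count out2.
case/hasP=> _ /mapP[z zE ->] /eqP <-.
by exists z.1 => //; case/andP: (hE _ zE).
Qed.

Lemma adjacent_relabel E a q : edges_below N E -> a < N ->
  adjacent (relabel h E) (h a) q -> exists2 u, u < N & q = h u /\ adjacent E a u.
Proof.
move=> /allP hE ha; case/orP=> /mapP[[u v] huv [eu ev]];
  have /andP[hu hv] := hE _ huv.
- by exists v; rewrite // (h_inj ha hu eu) /adjacent huv.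
- by exists u; rewrite // (h_inj ha hv ev) /adjacent huv orbT.
Qed.

Lemma linked_relabel E ok ok' a b : edges_below N E ->
  (forall u, u < N -> ok u -> ok' (h u)) ->
  linked E ok a b -> linked (relabel h E) ok' (h a) (h b).
Proof.
move=> /allP hE hok; apply: linked_map => u v ou ov huv.
have /andP[hu hv] := hE _ huv.
by apply: linked_edge; [exact: hok | exact: hok | exact: (map_f _ huv)].
Qed.

Lemma linked_relabel_inv E ok ok' a b : edges_below N E ->
  (forall u, u < N -> ok' (h u) -> ok u) -> a < N -> b < N ->
  linked (relabel h E) ok' (h a) (h b) -> linked E ok a b.
Proof.
move=> hE hok ha hb l.
suff gen p q : linked (relabel h E) ok' p q ->
    forall c, c < N -> p = h c -> q = h b -> linked E ok c b.
  exact: gen _ _ l a ha erefl erefl.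
elim=> [u|u v w ou ov huv _ IH] c hc eu; subst u.
  by move/(h_inj hc hb) ->; apply: linked_refl.
move=> ew; have [d hd [ev hcd]] := adjacent_relabel hE hc huv; subst v.
by apply: linked_step (IH d hd erefl ew) => //; apply: hok.
Qed.

Lemma essential_relabel E v : edges_below N E -> v < N ->
  essential E v -> essential (relabel h E) (h v).
Proof.
move=> hE hv [nt|[a [b [ha hb nl]]]]; first by left; rewrite degrees_relabel.
have aN := degrees12_lt hE ha; have bN := degrees12_lt hE hb.
right; exists (h a), (h b); rewrite !degrees_relabel //; split=> // l; apply: nl.
by apply: linked_relabel_inv l => // u hu /=; apply: contra => /eqP ->.
Qed.

Lemma two_edge_linked_relabel E : edges_below N E ->
  two_edge_linked E -> two_edge_linked (relabel h E).
Proof.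
move=> hE Q a' b' z' E0' ha' hb' hz.
have [a aN ea] := degrees12_relabel hE ha'; have [b bN eb] := degrees12_relabel hE hb'.
subst a' b'; rewrite degrees_relabel // in ha'; rewrite degrees_relabel // in hb'.
have /mapP[z zE ez] : z' \in relabel h E by rewrite (perm_mem hz) mem_head.
have hE0 : perm_eq (relabel h (rem z E)) E0'.
  rewrite -(perm_cons z') (perm_trans _ hz) // ez perm_sym.
  exact: (perm_map _ (perm_to_rem zE)).
apply: linked_perm hE0 (linked_relabel (edges_below_rem _ hE) _ _) => //.
exact: Q ha' hb' (perm_to_rem zE).
Qed.

End Relabel.

Definition ladder n := flatten [seq [:: (i, i.+1); (i.+1, i)] | i <- iota 0 n].

Lemma ladderS n : ladder n.+1 = ladder n ++ [:: (n, n.+1); (n.+1, n)].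
Proof. by rewrite /ladder -addn1 iotaD map_cat flatten_cat /= add0n addn1. Qed.

Lemma mem_ladder n u v :
  (u, v) \in ladder n = ((v == u.+1) && (u < n)) || ((u == v.+1) && (v < n)).
Proof.
elim: n => [|n IH]; first by rewrite !ltn0 !andbF.
rewrite ladderS mem_cat IH !inE !xpair_eqE.
apply/idP/idP; lia.
Qed.

Lemma size_ladder n : size (ladder n) = 2 * n.
Proof. by elim: n => // n IH; rewrite ladderS size_cat IH /=; lia. Qed.

Lemma degrees_ladder n v :
  degrees (ladder n) v = ((v < n) + (0 < v <= n), (v < n) + (0 < v <= n)).
Proof.
rewrite /degrees /indeg /outdeg.
elim: n => [|n [IH1 IH2]]; first by congr pair => /=; lia.
by rewrite ladderS !count_cat IH1 IH2 /=; congr pair; lia.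
Qed.

Lemma O_graph_edges n : gedges (O_graph n) =
  ladder n ++ [:: (0, n.+1); (n.+1, n.+1); (n, n.+2); (n.+2, n.+2)].
Proof. by []. Qed.

Lemma O_graph_wf n : wf_graph (O_graph n).
Proof.
apply/allP => -[u v]; rewrite O_graph_edges mem_cat mem_ladder !inE !xpair_eqE /=.
by move=> h; apply/andP; lia.
Qed.

Lemma size_O_graph n : size (gedges (O_graph n)) = 2 * n + 4.
Proof. by rewrite O_graph_edges size_cat size_ladder. Qed.

Lemma O_graph_degrees n v : degrees (gedges (O_graph n)) v =
  ((v < n) + (0 < v <= n) + 2 * (n.+1 == v) + 2 * (n.+2 == v),
   (v < n) + (0 < v <= n) + (0 == v) + (n.+1 == v) + (n == v) + (n.+2 == v)).
Proof.
have := degrees_ladder n v; rewrite O_graph_edges /degrees /indeg /outdeg.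
by rewrite !count_cat => -[-> ->] /=; congr pair; lia.
Qed.

Lemma O_graph_deg12 n v : degrees (gedges (O_graph n)) v = (1, 2) -> v = 0 \/ v = n.
Proof. by rewrite O_graph_degrees => -[]; lia. Qed.

Lemma O_graph_separated n k : 0 < k < n -> ~ linked (gedges (O_graph n)) (predC1 k) 0 n.
Proof.
move=> hk l; suff left_side a b : linked (gedges (O_graph n)) (predC1 k) a b ->
    (a < k) || (a == n.+1) -> (b < k) || (b == n.+1) by move: (left_side _ _ l); lia.
elim=> // u v w ou ov huv _ IH hu; apply: IH; move: ou ov hu huv.
by rewrite /adjacent !O_graph_edges !mem_cat !mem_ladder !inE !xpair_eqE /=; lia.
Qed.

Lemma O_graph_essential n v : essential (gedges (O_graph n)) v.
Proof.
have [hv|hv] := boolP (0 < v < n); last by left; rewrite O_graph_degrees xpair_eqE; lia.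
right; exists 0, n; split; last exact: O_graph_separated.
all: by rewrite O_graph_degrees; congr pair; lia.
Qed.

Lemma O_graph_two_edge_linked n : two_edge_linked (gedges (O_graph n)).
Proof.
move=> a b z E0 /O_graph_deg12 ha /O_graph_deg12 hb hz.
have walk m : m <= n -> linked E0 xpredT 0 m.
  elim: m => [|m IH] hm; first exact: linked_refl.
  apply: linked_trans (IH (ltnW hm)) _.
  have e1 : (m, m.+1) \in z :: E0.
    by rewrite -(perm_mem hz) O_graph_edges mem_cat mem_ladder eqxx hm.
  have e2 : (m.+1, m) \in z :: E0.
    by rewrite -(perm_mem hz) O_graph_edges mem_cat mem_ladder eqxx hm orbT.
  case/predU1P: e1 => [ez|]; last exact: linked_edge.
  apply/linked_sym/linked_edge => //; move: e2; rewrite -ez.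
  by case/predU1P => // -[]; lia.
have lk := walk n (leqnn n); have lk' := linked_sym lk.
by case: ha hb => -> [] ->; try apply: linked_refl.
Qed.

Lemma leq_inj_in m k (f : nat -> nat) : {in [pred v | v < m] &, injective f} ->
  (forall v, v < m -> f v < k) -> m <= k.
Proof.
move=> f_inj f_lt; have := @uniq_leq_size _ (map f (iota 0 m)) (iota 0 k).
rewrite size_map !size_iota; apply.
  by rewrite map_inj_in_uniq ?iota_uniq // => u v; rewrite !mem_iota; apply: f_inj.
by move=> y /mapP[v]; rewrite !mem_iota /= => /f_lt ? ->.
Qed.

Theorem mainTheorem7 (n : nat) (G : graph) :
  wf_graph G -> rearrangement_exists (O_graph n) G ->
  (2 * n + 4 <= size (gedges G))%N.
Proof.
move=> wfG [E1 [E2 [exp1 [exp2 [eN [f [f_inj [f_lt f_perm]]]]]]]].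
have wfO := O_graph_wf n; have wf1 := expansion_wf exp1 wfO.
have O_E1 : n.+3 <= gnv E1 := expansion_gnv exp1.
have Q2 : two_edge_linked (gedges E2).
  apply/(two_edge_linked_perm f_perm)/(two_edge_linked_relabel f_inj wf1).
  exact/(expansion_two_edge_linked exp1 wfO)/O_graph_two_edge_linked.
have f_G v : v < n.+3 -> f v < gnv G.
  move=> hv; have hv1 : v < gnv E1 := leq_trans hv O_E1.
  have ess2 : essential (gedges E2) (f v).
    apply/(essential_perm _ f_perm)/(essential_relabel f_inj wf1 hv1).
    exact: expansion_essential exp1 wfO hv (O_graph_essential n v).
  exact: (expansion_essential_inv exp2 wfG Q2 (f_lt v hv1) ess2).1.
have sub : {subset [pred v | v < n.+3] <= [pred v | v < gnv E1]}.
  by move=> v /leq_trans; apply.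
have := leq_inj_in (sub_in2 sub f_inj) f_G.
have := expansion_euler exp1; have := expansion_euler exp2.
have := perm_size f_perm; rewrite size_map size_O_graph /= -eN; lia.
Qed.
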